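(* Let $X$ be a finite set with $|X|\ge 3$, let $\mathcal T$ be a triplet cover for a tree $T\in B(X)$, and let $x\in X$. If $\mu(x)=2$, then $\deg_{\mathcal T}(x)=1$.
   Context: A binary phylogenetic $X$-tree is an unrooted tree whose leaf set is $X$ and all of whose non-leaf vertices are unlabelled of degree three; $B(X)$ is the set of such trees; $\mathring V$ is the set of interior vertices. Pairs in $\binom{X}{2}$ are written $ab$, triples $abc$. Given $\mathcal T\subseteq\binom{X}{2}$, a triple $abc$ supports $v\in\mathring V$ if $a,b,c$ lie one in each of the three components of $T$ minus $v$ and $ab,ac,bc\in\mathcal T$; $S_v(\mathcal T)$ is the set of such triples; $\mathcal T$ is a triplet cover for $T$ if $S_v(\mathcal T)\neq\emptyset$ for all $v\in\mathring V$. The support graph $G(\mathcal T)$ is the bipartite graph on $X\amalg\mathring V$ with $\{x,v\}$ an edge iff $x\in A$ for all $A\in S_v(\mathcal T)$; $\deg_{\mathcal T}(x)$ is the degree of $x$ in $G(\mathcal T)$. The multiplicity $\mu(x)=\mu_{\mathcal T}(x)$ is the number of elements of $\mathcal T$ containing $x$. *)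

From mathcomp Require Import all_boot.
Set Implicit Arguments. Unset Strict Implicit. Unset Printing Implicit Defensive.

Section PhyloDefs.
Variables (X V : finType).

Definition vdeg (e : rel V) (v : V) : nat := #|[set w | e v w]|.

(* An unrooted binary phylogenetic X-tree: a finite tree on V (simple graph,
   connected, acyclic) whose leaves (degree-1 vertices) are labelled
   bijectively by X via [leaf], all other vertices being unlabelled of
   degree three. *)
Definition is_binary_phylo_tree (e : rel V) (leaf : X -> V) : Prop :=
  [/\ symmetric e, irreflexive e,
      (forall u w : V, connect e u w) &
      (forall p : seq V, uniq p -> 2 < size p -> ~~ cycle e p)] /\
  [/\ injective leaf,
      (forall x : X, vdeg e (leaf x) = 1) &
      (forall v : V, v \notin codom leaf -> vdeg e v = 3)].

Definition interior (leaf : X -> V) (v : V) : bool := v \notin codom leaf.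

Definition rel_minus (e : rel V) (v : V) : rel V :=
  [rel u w | [&& e u w, u != v & w != v]].

Definition separated (e : rel V) (leaf : X -> V) (v : V) (a b : X) : bool :=
  ~~ connect (rel_minus e v) (leaf a) (leaf b).

Definition pair_set (T : {set {set X}}) : Prop :=
  forall p, p \in T -> #|p| = 2.

Definition supports (e : rel V) (leaf : X -> V) (T : {set {set X}})
    (v : V) (a b c : X) : bool :=
  [&& separated e leaf v a b, separated e leaf v a c, separated e leaf v b c,
      [set a; b] \in T, [set a; c] \in T & [set b; c] \in T].

Definition Sv (e : rel V) (leaf : X -> V) (T : {set {set X}}) (v : V)
    : {set {set X}} :=
  [set A : {set X} | [exists a, exists b, exists c,
      (A == [set a; b; c]) && supports e leaf T v a b c]].

Definition triplet_cover (e : rel V) (leaf : X -> V) (T : {set {set X}}) : Prop :=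
  forall v, interior leaf v -> Sv e leaf T v != set0.

Definition support_edge (e : rel V) (leaf : X -> V) (T : {set {set X}})
    (x : X) (v : V) : bool :=
  interior leaf v && [forall A in Sv e leaf T v, x \in A].

Definition support_deg (e : rel V) (leaf : X -> V) (T : {set {set X}}) (x : X)
    : nat := #|[set v | support_edge e leaf T x v]|.

End PhyloDefs.

Definition multiplicity (X : finType) (T : {set {set X}}) (x : X) : nat :=
  #|[set p in T | x \in p]|.

From mathcomp Require Import all_boot.
Set Implicit Arguments. Unset Strict Implicit. Unset Printing Implicit Defensive.

(* The leaf x has a single neighbour v, which is interior because |X| >= 3;
   x is isolated in T - v, so every triple supporting v contains x, which
   makes x-v an edge of G(T).  Conversely, if x-w is an edge of G(T), a triple
   supporting w contains x, hence is {x} together with two partners y of x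
   (those with xy in the cover).  As mu(x) = 2, x has at most two partners, so
   all these triples coincide, and in a connected graph at most one vertex
   separates three given vertices pairwise: w = v. *)

Lemma card_set3 (T : finType) (a b c : T) :
  a != b -> a != c -> b != c -> #|[set a; b; c]| = 3.
Proof.
move=> ab ac bc; rewrite -setUA cardsU1 cards2 bc !inE.
by rewrite (negbTE ab) (negbTE ac).
Qed.

Lemma set3P (T : finType) (a b c w : T) :
  reflect [\/ w = a, w = b | w = c] (w \in [set a; b; c]).
Proof.
rewrite !inE; apply: (iffP idP) => [|[] ->]; rewrite ?eqxx ?orbT //.
by case/orP => [/orP [] |] /eqP; [constructor 1 | constructor 2 | constructor 3].
Qed.

Lemma vdeg1_neighbour (V : finType) (e : rel V) u :
  vdeg e u = 1 -> exists v, forall w, e u w = (w == v).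
Proof. by move=> /eqP /cards1P [v Nu]; exists v => w; rewrite -in_set1 -Nu inE. Qed.

Lemma connect_last_step (V : finType) (r : rel V) u v :
  u != v -> connect r u v -> exists2 w, connect (rel_minus r v) u w & r w v.
Proof.
move=> uv /connectP [p + lastp]; elim: p u uv lastp => [|y p IHp] u uv /=.
  by move=> uE; rewrite uE eqxx in uv.
move=> lastp /andP [ruy pathp]; have [yv|yv] := eqVneq y v.
  by exists u; [exact: connect0 | rewrite -yv].
have [w cw rw] := IHp y yv lastp pathp; exists w => //.
by apply: connect_trans cw; apply: connect1; rewrite /rel_minus /= ruy uv yv.
Qed.

Section Separation.
Variables (V : finType) (e : rel V).

Lemma connect_minus_pendant u v t :
  (forall w, e u w -> w = v) -> connect (rel_minus e v) u t -> t = u.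
Proof.
move=> pend /connectP [[|y p] /= + ->] // => /andP [/and3P [/pend -> _]].
by rewrite eqxx.
Qed.

Hypothesis e_sym : symmetric e.

Lemma rel_minus_sym v : symmetric (rel_minus e v).
Proof. by move=> u w; rewrite /rel_minus /= e_sym; congr (_ && _); apply: andbC. Qed.

Lemma connect_minus_sym v : connect_sym (rel_minus e v).
Proof. exact/sym_connect_sym/rel_minus_sym. Qed.

Definition separates (v s t : V) : bool := ~~ connect (rel_minus e v) s t.

Definition separates3 (v s1 s2 s3 : V) : bool :=
  [&& separates v s1 s2, separates v s1 s3 & separates v s2 s3].

Lemma separates_joined v s t w :
  connect (rel_minus e v) s w -> connect (rel_minus e v) t w -> ~~ separates v s t.
Proof.
by move=> sw tw; rewrite negbK (connect_trans sw) // connect_minus_sym.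
Qed.

Lemma connect_minus_avoid v1 v2 s t : connect (rel_minus e v1) s t ->
  separates v1 s v2 -> connect (rel_minus e v2) s t.
Proof.
move=> /connectP [p + ->]; elim: p s => [|y p IHp] s /=; first by rewrite connect0.
move=> /andP [/and3P [esy sv1 yv1] pathp] sep_s.
have s_y : rel_minus e v1 s y by rewrite /rel_minus /= esy sv1 yv1.
have sv2 : s != v2 by apply: contraNneq sep_s => ->; rewrite connect0.
have yv2 : y != v2 by apply: contraNneq sep_s => <-; rewrite connect1.
have sep_y : separates v1 y v2.
  by apply: contra sep_s; apply: connect_trans; apply: connect1.
apply: connect_trans (IHp y pathp sep_y); apply: connect1.
by rewrite /rel_minus /= esy sv2.
Qed.

Hypothesis e_conn : forall u w : V, connect e u w.

Lemma branch_neighbour v s :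
  s != v -> exists2 w, connect (rel_minus e v) s w & e v w.
Proof.
move=> sv; have [w sw ewv] := connect_last_step sv (e_conn s v).
by exists w; rewrite // e_sym.
Qed.

(* If v1 <> v2, two of the s_i lie in branches at v1 that avoid v2, and these
   branches are joined through v1 once v2 is removed. *)
Lemma separates3_vertex_unique v1 v2 s1 s2 s3 : v1 \notin [:: s1; s2; s3] ->
  separates3 v1 s1 s2 s3 -> separates3 v2 s1 s2 s3 -> v1 = v2.
Proof.
rewrite !inE !negb_or eq_sym [v1 == s2]eq_sym [v1 == s3]eq_sym.
move=> /and3P [s1v s2v s3v] /and3P [s12 s13 s23] /and3P [t12 t13 t23].
apply/eqP/negPn/negP => v12.
have linked s t : s != v1 -> t != v1 -> separates v1 s v2 -> separates v1 t v2 ->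
    ~~ separates v2 s t.
  move=> sv tv sep_s sep_t.
  have [w sw ew] := branch_neighbour sv; have [w' tw' ew'] := branch_neighbour tv.
  have wv2 : w != v2 by apply: contraNneq sep_s => <-.
  have w'v2 : w' != v2 by apply: contraNneq sep_t => <-.
  apply: (separates_joined (connect_minus_avoid sw sep_s)).
  apply: connect_trans (connect_minus_avoid tw' sep_t) _.
  rewrite connect_minus_sym; apply: (@connect_trans _ _ v1); apply: connect1.
    by rewrite /rel_minus /= e_sym ew wv2 v12.
  by rewrite /rel_minus /= ew' v12 w'v2.
have joined s t :
    ~~ separates v1 s v2 -> ~~ separates v1 t v2 -> ~~ separates v1 s t.
  by move=> /negPn sv2 /negPn tv2; apply: separates_joined sv2 tv2.
case: (boolP (separates v1 s1 v2)) => sep1;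
  case: (boolP (separates v1 s2 v2)) => sep2.
- by move: t12; apply/negP/linked.
- have sep3 : separates v1 s3 v2 by apply: contraLR s23 => /(joined _ _ sep2).
  by move: t13; apply/negP/linked.
- have sep3 : separates v1 s3 v2 by apply: contraLR s13 => /(joined _ _ sep1).
  by move: t23; apply/negP/linked.
- by move: s12; apply/negP/joined.
Qed.

Lemma neighbour_in_branch v t s1 s2 s3 :
  vdeg e v = 3 -> v \notin [:: s1; s2; s3] -> separates3 v s1 s2 s3 -> e v t ->
  [|| connect (rel_minus e v) s1 t, connect (rel_minus e v) s2 t
    | connect (rel_minus e v) s3 t].
Proof.
rewrite !inE !negb_or eq_sym [v == s2]eq_sym [v == s3]eq_sym.
move=> deg3 /and3P [s1v s2v s3v] /and3P [s12 s13 s23] evt.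
have [w1 c1 e1] := branch_neighbour s1v.
have [w2 c2 e2] := branch_neighbour s2v.
have [w3 c3 e3] := branch_neighbour s3v.
have distinct s s' w w' : separates v s s' ->
    connect (rel_minus e v) s w -> connect (rel_minus e v) s' w' -> w != w'.
  move=> sep cw cw'; apply: contraTneq sep => ww'.
  by rewrite ww' in cw; apply: separates_joined cw cw'.
have N3 : [set w1; w2; w3] = [set w | e v w].
  have degv : #|[set w | e v w]| = 3 := deg3.
  apply/eqP; rewrite eqEcard degv card_set3 ?(distinct _ _ _ _ s12 c1 c2)
    ?(distinct _ _ _ _ s13 c1 c3) ?(distinct _ _ _ _ s23 c2 c3) // andbT.
  by apply/subsetP => w /set3P [] ->; rewrite inE.
have : t \in [set w1; w2; w3] by rewrite N3 inE.
by case/set3P => ->; rewrite ?c1 ?c2 ?c3 ?orbT.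
Qed.

End Separation.

Section Triples.
Variables (X V : finType) (e : rel V) (leaf : X -> V) (T : {set {set X}}).

Lemma interior_notin_leaves v a b c :
  interior leaf v -> v \notin [:: leaf a; leaf b; leaf c].
Proof. by apply: contra; rewrite !inE => /or3P [] /eqP ->; apply: codom_f. Qed.

Lemma separated_neq v a b : separated e leaf v a b -> a != b.
Proof. by apply: contraTneq => ->; rewrite /separated connect0. Qed.

Lemma card_Sv v A : A \in Sv e leaf T v -> #|A| = 3.
Proof.
rewrite inE => /existsP [a /existsP [b /existsP [c /andP [/eqP -> sup]]]].
move: sup => /and3P [sab sac /and4P [sbc _ _ _]].
by rewrite card_set3 ?(separated_neq sab) ?(separated_neq sac) ?(separated_neq sbc).
Qed.

Hypothesis e_sym : symmetric e.

Lemma Sv_pair v A a b : A \in Sv e leaf T v -> a \in A -> b \in A -> a != b ->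
  separated e leaf v a b && ([set a; b] \in T).
Proof.
rewrite inE => /existsP [a' /existsP [b' /existsP [c' /andP [/eqP -> sup]]]].
move: sup => /and3P [sab sac /and4P [sbc Tab Tac Tbc]].
have swap p q : separated e leaf v p q && ([set p; q] \in T) ->
    separated e leaf v q p && ([set q; p] \in T).
  by rewrite /separated connect_minus_sym // setUC.
case/set3P => -> /set3P [] ->; rewrite ?eqxx // => _;
  by [apply/andP | apply/swap/andP].
Qed.

Hypothesis e_conn : forall u w : V, connect e u w.

Lemma Sv_vertex_unique v1 v2 A : interior leaf v1 ->
  A \in Sv e leaf T v1 -> A \in Sv e leaf T v2 -> v1 = v2.
Proof.
move=> iv1 Av1 Av2; move: (Av1); rewrite inE.
case/existsP => [a /existsP [b /existsP [c /andP [/eqP EA sup]]]].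
move: sup => /and3P [sab sac /and4P [sbc _ _ _]].
have sep2 p q : p \in A -> q \in A -> p != q -> separated e leaf v2 p q.
  by move=> pA qA pq; case/andP: (Sv_pair Av2 pA qA pq).
have [aA bA cA] : [/\ a \in A, b \in A & c \in A] by rewrite EA !inE !eqxx !orbT.
apply: (separates3_vertex_unique e_sym e_conn (interior_notin_leaves a b c iv1)).
  exact/and3P.
apply/and3P; split; apply: sep2 => //.
- exact: separated_neq sab.
- exact: separated_neq sac.
- exact: separated_neq sbc.
Qed.

End Triples.

Definition partners (X : finType) (T : {set {set X}}) (x : X) : {set X} :=
  [set y | (y != x) && ([set x; y] \in T)].

Lemma card_partners (X : finType) (T : {set {set X}}) x :
  #|partners T x| <= multiplicity T x.
Proof.
have inj : {in partners T x &, injective (fun y => [set x; y])}.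
  move=> y z /[!inE] /andP [yx _] /andP [zx _] Exyz.
  have : y \in [set x; z] by rewrite -Exyz set22.
  by rewrite !inE (negbTE yx) => /eqP.
rewrite /multiplicity -(card_in_imset inj); apply/subset_leq_card/subsetP.
by move=> _ /imsetP [y /[!inE] /andP [_ Ty] ->]; rewrite Ty set21.
Qed.

Section Partners.
Variables (X V : finType) (e : rel V) (leaf : X -> V) (T : {set {set X}}).
Hypothesis e_sym : symmetric e.

Lemma Sv_partners v A x :
  A \in Sv e leaf T v -> x \in A -> A :\ x \subset partners T x.
Proof.
move=> Av xA; apply/subsetP => y /setD1P [yx yA]; rewrite inE yx.
by rewrite eq_sym in yx; case/andP: (Sv_pair e_sym Av xA yA yx).
Qed.

Lemma Sv_eq_partners v A x : multiplicity T x <= 2 ->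
  A \in Sv e leaf T v -> x \in A -> A = x |: partners T x.
Proof.
move=> mu2 Av xA; rewrite -{1}(setD1K xA); congr (_ |: _); apply/eqP.
have cardAx : #|A :\ x| = 2 by move: (cardsD1 x A); rewrite (card_Sv Av) xA => -[].
by rewrite eqEcard (Sv_partners Av xA) cardAx (leq_trans (card_partners T x)).
Qed.

End Partners.

Section LeafNeighbour.
Variables (X V : finType) (e : rel V) (leaf : X -> V).
Hypotheses (e_sym : symmetric e) (e_conn : forall u w : V, connect e u w).
Hypothesis leaf_inj : injective leaf.
Hypothesis leaf_deg1 : forall x, vdeg e (leaf x) = 1.
Hypothesis leaf_deg3 : forall v, v \notin codom leaf -> vdeg e v = 3.
Hypothesis cardX : 2 < #|X|.

Lemma leaf_neighbourE x v w : e (leaf x) v -> e (leaf x) w = (w == v).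
Proof.
have [u Nx] := vdeg1_neighbour (leaf_deg1 x).
by move=> exv; rewrite Nx; move: exv; rewrite Nx => /eqP ->.
Qed.

(* Two adjacent leaves would form a whole component, leaving no room for a
   third leaf. *)
Lemma leaf_neighbour_interior x v : e (leaf x) v -> interior leaf v.
Proof.
move=> exv; apply/codomP => -[y vE]; rewrite {v}vE in exv.
have [z] : exists z, z \notin [set x; y].
  apply/existsP; rewrite -negb_forall; apply: contraL cardX => /forallP allz.
  have sub : [set: X] \subset [set x; y] by apply/subsetP => u _; apply: allz.
  rewrite -leqNgt -cardsT (leq_trans (subset_leq_card sub)) //.
  by rewrite cards2 ltnS leq_b1.
rewrite !inE negb_or -!(inj_eq leaf_inj) => /andP [zx zy].
have eyx : e (leaf y) (leaf x) by rewrite e_sym.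
have [w zw ewy] := connect_last_step zy (e_conn (leaf z) (leaf y)).
move: ewy; rewrite e_sym (leaf_neighbourE _ eyx) => /eqP wx; rewrite {w}wx in zw.
have [w' _] := connect_last_step zx zw.
by rewrite /rel_minus /= e_sym (leaf_neighbourE _ exv) => /andP [->].
Qed.

Lemma Sv_leaf_neighbour (T : {set {set X}}) x v A :
  e (leaf x) v -> A \in Sv e leaf T v -> x \in A.
Proof.
move=> exv; rewrite inE => /existsP [a /existsP [b /existsP [c /andP [/eqP -> sup]]]].
move: sup => /and3P [sab sac /and4P [sbc _ _ _]].
have iv := leaf_neighbour_interior exv.
have sep : separates3 e v (leaf a) (leaf b) (leaf c) by apply/and3P.
have pendant w : e (leaf x) w -> w = v by rewrite (leaf_neighbourE _ exv) => /eqP.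
have isolated s : connect (rel_minus e v) s (leaf x) -> s = leaf x.
  by rewrite connect_minus_sym //; apply: connect_minus_pendant.
have := neighbour_in_branch e_sym e_conn (t := leaf x) (leaf_deg3 iv)
  (interior_notin_leaves a b c iv) sep.
rewrite e_sym => /(_ exv).
by case/or3P => /isolated /leaf_inj <-; rewrite !inE eqxx ?orbT.
Qed.

Lemma support_edge_leaf_neighbour (T : {set {set X}}) x v :
  e (leaf x) v -> support_edge e leaf T x v.
Proof.
move=> exv; rewrite /support_edge (leaf_neighbour_interior exv) /=.
by apply/forall_inP => A; apply: Sv_leaf_neighbour.
Qed.

End LeafNeighbour.

Theorem lemma2 (X V : finType) (e : rel V) (leaf : X -> V)
    (T : {set {set X}}) (x : X) :
  2 < #|X| ->
  is_binary_phylo_tree e leaf ->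
  pair_set T ->
  triplet_cover e leaf T ->
  multiplicity T x = 2 ->
  support_deg e leaf T x = 1.
Proof.
move=> cardX [[e_sym _ e_conn _] [leaf_inj leaf_deg1 leaf_deg3]] _ cover mu.
have [v0 Nx] := vdeg1_neighbour (leaf_deg1 x).
have edge0 : support_edge e leaf T x v0.
  by apply: support_edge_leaf_neighbour => //; rewrite Nx.
have triple v : support_edge e leaf T x v ->
    exists2 A, A \in Sv e leaf T v & A = x |: partners T x.
  case/andP => iv /forall_inP xSv; have /set0Pn [A Av] := cover v iv.
  by exists A; rewrite // (Sv_eq_partners e_sym _ Av (xSv A Av)) ?mu.
rewrite /support_deg (_ : [set v | _] = [set v0]) ?cards1 //.
apply/setP => v; rewrite !inE; apply/idP/eqP => [edge|->//].
have [A Av AE] := triple v edge; have [A0 Av0 A0E] := triple v0 edge0.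
by apply: (Sv_vertex_unique e_sym e_conn (andP edge).1 Av); rewrite AE -A0E.
Qed.
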